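(* Let $0<q<1$. Then \[ \sum_{n=0}^{\infty}\frac{(1/2|q^{2})_{n}^{2}}{[n]_{q^{2}}!\,[n+2]_{q^{2}}!}\,q^{4n}=\frac{(1+q)^{4}q^{1/4}}{\pi_{q}(1+q+q^{2})^{2}}. \]
   Context: Let $0<q<1$ and write $q^{x}=e^{x\log q}$. $[z]_{q^2}=\frac{1-q^{2z}}{1-q^2}$; $[0]_{q^2}!=1$, $[n]_{q^2}!=\prod_{k=1}^n[k]_{q^2}$; $(1/2|q^2)_n=\prod_{k=0}^{n-1}[1/2+k]_{q^2}$ (empty product $=1$). With $(z;q)_\infty=\prod_{k\ge0}(1-zq^k)$, $\pi_q=(1-q^2)q^{1/4}\frac{(q^2;q^2)_\infty^2}{(q;q^2)_\infty^2}$. *)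

From Stdlib Require Import Reals.
Open Scope R_scope.

Definition qpow (q x : R) : R := exp (x * ln q).

Definition qnum (q z : R) : R := (1 - qpow q (2 * z)) / (1 - q ^ 2).

Fixpoint qfact (q : R) (n : nat) : R :=
  match n with
  | O => 1
  | S m => qfact q m * qnum q (INR (S m))
  end.

(* (1/2|q^2)_n = prod_{k=0}^{n-1} [1/2 + k]_{q^2} *)
Fixpoint qhalf_poch (q : R) (n : nat) : R :=
  match n with
  | O => 1
  | S m => qhalf_poch q m * qnum q (1/2 + INR m)
  end.

Fixpoint qpoch_partial (z p : R) (N : nat) : R :=
  match N with
  | O => 1
  | S m => qpoch_partial z p m * (1 - z * p ^ m)
  end.

Definition qpoch_inf (z p L : R) : Prop := Un_cv (qpoch_partial z p) L.

(* pi_q = (1-q^2) q^{1/4} (q^2;q^2)_inf^2 / (q;q^2)_inf^2,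
   given A = (q^2;q^2)_inf and B = (q;q^2)_inf *)
Definition pi_q_of (q A B : R) : R :=
  (1 - q ^ 2) * qpow q (1/4) * A ^ 2 / B ^ 2.

Definition term6 (q : R) (n : nat) : R :=
  (qhalf_poch q n) ^ 2 / (qfact q n * qfact q (n + 2)) * q ^ (4 * n).

(* The series is (1 + q^2)^-1 times the q-Gauss sum S(z) = 2phi1(a, a; a^2 z; p, z) at
   a = q, p = q^2, z = q^4.  Heine's contiguous relation telescopes to
   S(z) = (1 - a z)^2 / ((1 - a^2 z) (1 - z)) * S(z p); iterating and using S(z p^K) -> 1 gives
   S(z) = (a z; p)_oo^2 / ((a^2 z; p)_oo (z; p)_oo).  At our parameters these products are
   (q^2; q^2)_oo and (q; q^2)_oo with their first factors removed, which produces pi_q. *)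

From Stdlib Require Import Reals Lra Lia.
From Coquelicot Require Import Coquelicot.
Open Scope R_scope.

Lemma pow_le_one (x : R) (n : nat) : 0 <= x <= 1 -> 0 <= x ^ n <= 1.
Proof.
  intros Hx; induction n as [|n IH]; simpl; nra.
Qed.

Lemma is_series_telescoping (g : nat -> R) (l : R) :
  is_lim_seq g l -> is_series (fun n => g n - g (S n)) (g O - l).
Proof.
  intros Hg; apply is_series_Reals, is_lim_seq_Reals.
  apply is_lim_seq_ext with (fun N => g O - g (S N)).
  - intros N; induction N as [|N IH]; simpl; [lra|]; rewrite <- IH; lra.
  - apply is_lim_seq_minus'; [apply is_lim_seq_const|].
    exact (proj1 (is_lim_seq_incr_1 g l) Hg).
Qed.

Lemma exp_le_compat (x y : R) : x <= y -> exp x <= exp y.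
Proof. intros [Hlt | ->]; [apply Rlt_le, exp_increasing, Hlt | apply Rle_refl]. Qed.

Lemma one_sub_ge_exp (x : R) : 0 <= x < 1 -> exp (- (x / (1 - x))) <= 1 - x.
Proof.
  intros Hx.
  assert (Hexp : 1 + x / (1 - x) <= exp (x / (1 - x))) by apply exp_ineq1_le.
  replace (1 + x / (1 - x)) with (/ (1 - x)) in Hexp by (field; lra).
  rewrite exp_Ropp; apply Rle_trans with (/ / (1 - x)).
  - apply Rinv_le_contravar; [apply Rinv_0_lt_compat; lra | exact Hexp].
  - rewrite Rinv_inv; lra.
Qed.

Section QPochhammer.

Variables z p : R.

Lemma qpoch_partial_shift (N : nat) :
  qpoch_partial z p (S N) = (1 - z) * qpoch_partial (z * p) p N.
Proof.
  induction N as [|N IH]; [simpl; ring|].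
  change (qpoch_partial z p (S (S N))) with (qpoch_partial z p (S N) * (1 - z * p ^ S N)).
  rewrite IH; cbn [qpoch_partial pow]; ring.
Qed.

Lemma qpoch_inf_shift (L : R) :
  z <> 1 -> qpoch_inf z p L -> qpoch_inf (z * p) p (L / (1 - z)).
Proof.
  unfold qpoch_inf; intros Hz HL; apply is_lim_seq_Reals in HL; apply is_lim_seq_Reals.
  apply is_lim_seq_ext with (fun N => qpoch_partial z p (S N) * / (1 - z)).
  - intros N; rewrite qpoch_partial_shift; field; lra.
  - apply (is_lim_seq_scal_r _ _ L), (proj1 (is_lim_seq_incr_1 _ L) HL).
Qed.

Hypothesis z_bounds : 0 <= z < 1.
Hypothesis p_bounds : 0 <= p < 1.

(* Each factor satisfies [1 - z p^k >= exp (- z p^k / (1 - z))], and these exponents sum to at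
   most [z / ((1 - z) (1 - p))]. *)
Lemma qpoch_partial_ge_exp (N : nat) :
  exp (- (z / ((1 - z) * (1 - p)))) <= qpoch_partial z p N.
Proof.
  set (c := z / ((1 - z) * (1 - p))).
  assert (Hc : 0 <= c) by (apply Rdiv_le_0_compat; nra).
  assert (Hpartial : forall n, exp (- (c * (1 - p ^ n))) <= qpoch_partial z p n).
  { intros n; induction n as [|n IH]; cbn [qpoch_partial].
    { rewrite pow_O, Rminus_diag, Rmult_0_r, Ropp_0, exp_0; lra. }
    assert (Hpn : 0 <= p ^ n <= 1) by (apply pow_le_one; lra).
    assert (Hfactor : exp (- (z * p ^ n / (1 - z))) <= 1 - z * p ^ n).
    { apply Rle_trans with (2 := one_sub_ge_exp (z * p ^ n) ltac:(nra)).
      apply exp_le_compat, Ropp_le_contravar; unfold Rdiv.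
      apply Rmult_le_compat_l; [nra|].
      apply Rinv_le_contravar; nra. }
    replace (- (c * (1 - p ^ S n))) with (- (c * (1 - p ^ n)) + - (z * p ^ n / (1 - z)))
      by (unfold c; simpl; field; lra).
    rewrite exp_plus; apply Rmult_le_compat; [left; apply exp_pos .. | exact IH | exact Hfactor]. }
  apply Rle_trans with (2 := Hpartial N), exp_le_compat, Ropp_le_contravar.
  assert (0 <= p ^ N) by (apply pow_le; lra); nra.
Qed.

Lemma qpoch_inf_pos (L : R) : qpoch_inf z p L -> 0 < L.
Proof.
  unfold qpoch_inf; intros HL; apply is_lim_seq_Reals in HL.
  set (e := exp (- (z / ((1 - z) * (1 - p))))).
  assert (He : Rbar_le e L).
  { apply (is_lim_seq_le (fun _ => e) (qpoch_partial z p));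
      [exact qpoch_partial_ge_exp | apply is_lim_seq_const | exact HL]. }
  apply Rlt_le_trans with (2 := He), exp_pos.
Qed.

End QPochhammer.

Section QGauss.

Variables p a : R.
Hypothesis p_pos : 0 < p.
Hypothesis p_le_a : p <= a.
Hypothesis a_lt_1 : a < 1.

(* [gauss_term z n = (a; p)_n^2 z^n / ((p; p)_n (a^2 z; p)_n)]. *)
Fixpoint gauss_term (z : R) (n : nat) : R :=
  match n with
  | O => 1
  | S m => gauss_term z m *
      ((1 - a * p ^ m) ^ 2 * z / ((1 - p * p ^ m) * (1 - a ^ 2 * z * p ^ m)))
  end.

Definition gauss_factor (z : R) : R := (1 - a * z) ^ 2 / ((1 - a ^ 2 * z) * (1 - z)).

Definition gauss_sum (z : R) : R := Series (gauss_term z).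

Let pow_p_bounds (n : nat) : 0 < p ^ n <= 1.
Proof. split; [apply pow_lt; lra | apply pow_le_one; lra]. Qed.

Let a2_bounds : 0 < a ^ 2 <= a.
Proof. nra. Qed.

Section FixedArgument.

Variable z : R.
Hypothesis z_bounds : 0 <= z < 1.

Let a2z_pow_lt_1 (n : nat) : 0 <= a ^ 2 * z * p ^ n < 1.
Proof.
  pose proof (pow_p_bounds n); pose proof a2_bounds.
  assert (0 <= a ^ 2 * z) by nra; split; nra.
Qed.

Let p_pow_S_lt_1 (n : nat) : p * p ^ n < 1.
Proof. pose proof (pow_p_bounds n); nra. Qed.

Lemma gauss_term_bounds (n : nat) : 0 <= gauss_term z n <= z ^ n.
Proof.
  induction n as [|n IH]; [simpl; lra|].
  cbn [gauss_term]; change (z ^ S n) with (z * z ^ n).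
  pose proof (pow_p_bounds n); pose proof (a2z_pow_lt_1 n); pose proof (p_pow_S_lt_1 n).
  set (x := p ^ n) in *.
  assert (Hratio : 0 <= (1 - a * x) ^ 2 * z / ((1 - p * x) * (1 - a ^ 2 * z * x)) <= z).
  { assert (Hden : 0 < (1 - p * x) * (1 - a ^ 2 * z * x)) by nra.
    assert ((1 - a * x) ^ 2 <= (1 - p * x) * (1 - a ^ 2 * z * x)).
    { pose proof a2_bounds.
      assert (0 <= 1 - a * x) by nra.
      assert (1 - a * x <= 1 - p * x) by nra.
      assert (a ^ 2 * z <= a) by nra.
      assert (1 - a * x <= 1 - a ^ 2 * z * x) by nra.
      replace ((1 - a * x) ^ 2) with ((1 - a * x) * (1 - a * x)) by ring.
      apply Rmult_le_compat; lra. }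
    split.
    { apply Rdiv_le_0_compat; [apply Rmult_le_pos; [apply pow2_ge_0 | lra] | exact Hden]. }
    apply Rmult_le_reg_r with (1 := Hden); unfold Rdiv.
    rewrite Rmult_assoc, Rinv_l by lra; nra. }
  split; [apply Rmult_le_pos; lra|].
  rewrite Rmult_comm; apply Rmult_le_compat; lra.
Qed.

Lemma gauss_term_shift (n : nat) :
  gauss_term (z * p) n = gauss_term z n * (1 - a ^ 2 * z) * p ^ n / (1 - a ^ 2 * z * p ^ n).
Proof.
  pose proof (a2z_pow_lt_1 0) as Ha2z; rewrite pow_O, Rmult_1_r in Ha2z.
  induction n as [|n IH]; [simpl; field; lra|].
  cbn [gauss_term]; rewrite IH.
  pose proof (pow_p_bounds n); pose proof (a2z_pow_lt_1 n); pose proof (a2z_pow_lt_1 (S n)).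
  pose proof (p_pow_S_lt_1 n); change (p ^ S n) with (p * p ^ n) in *.
  field; repeat split; nra.
Qed.

Definition gauss_telescoper (n : nat) : R := (1 - p ^ n) * gauss_term z n / (1 - z).

Lemma gauss_contiguity (n : nat) :
  gauss_term z n - gauss_factor z * gauss_term (z * p) n =
  gauss_telescoper n - gauss_telescoper (S n).
Proof.
  pose proof (a2z_pow_lt_1 0) as Ha2z; rewrite pow_O, Rmult_1_r in Ha2z.
  pose proof (pow_p_bounds n); pose proof (a2z_pow_lt_1 n); pose proof (p_pow_S_lt_1 n).
  rewrite gauss_term_shift; unfold gauss_telescoper, gauss_factor.
  cbn [gauss_term]; change (p ^ S n) with (p * p ^ n).
  field; repeat split; nra.
Qed.

Lemma is_lim_seq_gauss_telescoper : is_lim_seq gauss_telescoper 0.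
Proof.
  apply is_lim_seq_le_le with (fun _ => 0) (fun n => z ^ n / (1 - z)).
  - intros n; unfold gauss_telescoper.
    pose proof (gauss_term_bounds n); pose proof (pow_p_bounds n).
    split.
    + apply Rdiv_le_0_compat; [apply Rmult_le_pos|]; lra.
    + unfold Rdiv; apply Rmult_le_compat_r; [apply Rlt_le, Rinv_0_lt_compat; lra | nra].
  - apply is_lim_seq_const.
  - replace (Finite 0) with (Rbar_mult 0 (/ (1 - z))) by (simpl; f_equal; ring).
    apply is_lim_seq_scal_r, is_lim_seq_geom; rewrite Rabs_pos_eq; lra.
Qed.

Lemma ex_series_gauss_term : ex_series (gauss_term z).
Proof.
  apply (@ex_series_le R_AbsRing R_CompleteNormedModule) with (fun n => z ^ n).
  - intros n; change (norm (gauss_term z n)) with (Rabs (gauss_term z n)).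
    pose proof (gauss_term_bounds n); rewrite Rabs_pos_eq; lra.
  - apply ex_series_geom; rewrite Rabs_pos_eq; lra.
Qed.

Lemma gauss_sum_bounds : 1 <= gauss_sum z <= / (1 - z).
Proof.
  split.
  - unfold gauss_sum; rewrite Series_incr_1 by exact ex_series_gauss_term.
    assert (0 <= Series (fun k => gauss_term z (S k))); [|change (gauss_term z 0) with 1; lra].
    pose proof (Series_scal_l 0 (fun _ => 0)) as Hseries0; rewrite !Rmult_0_l in Hseries0.
    rewrite <- Hseries0.
    apply Series_le; [intros k; pose proof (gauss_term_bounds (S k)); lra|].
    apply (ex_series_incr_1 (gauss_term z)), ex_series_gauss_term.
  - unfold gauss_sum; rewrite <- Series_geom by (rewrite Rabs_pos_eq; lra).
    apply Series_le; [exact gauss_term_bounds|].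
    apply ex_series_geom; rewrite Rabs_pos_eq; lra.
Qed.

End FixedArgument.

Let scaled_bounds (z : R) (K : nat) : 0 <= z < 1 -> 0 <= z * p ^ K < 1.
Proof. intros Hz; pose proof (pow_p_bounds K); split; nra. Qed.

Lemma gauss_sum_contiguity (z : R) :
  0 <= z < 1 -> gauss_sum z = gauss_factor z * gauss_sum (z * p).
Proof.
  intros Hz.
  assert (Hzp : 0 <= z * p < 1) by (pose proof (scaled_bounds z 1 Hz); rewrite pow_1 in *; lra).
  assert (Hdiff : is_series (fun n => gauss_term z n - gauss_factor z * gauss_term (z * p) n) 0).
  { apply is_series_ext with (fun n => gauss_telescoper z n - gauss_telescoper z (S n)).
    - intros n; symmetry; apply gauss_contiguity, Hz.
    - pose proof (is_series_telescoping _ _ (is_lim_seq_gauss_telescoper z Hz)) as Htel.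
      replace (gauss_telescoper z 0 - 0) with 0 in Htel
        by (unfold gauss_telescoper; rewrite pow_O; unfold Rdiv; ring).
      exact Htel. }
  unfold gauss_sum.
  rewrite (Series_ext (gauss_term z)
    (fun n => (gauss_term z n - gauss_factor z * gauss_term (z * p) n) +
              gauss_factor z * gauss_term (z * p) n)) by (intros; ring).
  rewrite Series_plus, Series_scal_l, (is_series_unique _ _ Hdiff); [ring | eexists; exact Hdiff |].
  exact (ex_series_scal_l (gauss_factor z) _ (ex_series_gauss_term _ Hzp)).
Qed.

Lemma gauss_sum_qpoch_partial (z : R) (K : nat) : 0 <= z < 1 ->
  gauss_sum z * qpoch_partial (a ^ 2 * z) p K * qpoch_partial z p K =
  qpoch_partial (a * z) p K ^ 2 * gauss_sum (z * p ^ K).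
Proof.
  intros Hz; induction K as [|K IH]; [cbn [qpoch_partial pow]; rewrite !Rmult_1_r; ring|].
  cbn [qpoch_partial].
  transitivity (gauss_sum z * qpoch_partial (a ^ 2 * z) p K * qpoch_partial z p K *
    ((1 - a ^ 2 * z * p ^ K) * (1 - z * p ^ K))); [ring|].
  pose proof (scaled_bounds z K Hz) as HzK; pose proof a2_bounds.
  rewrite IH, (gauss_sum_contiguity (z * p ^ K)) by exact HzK.
  replace (z * p ^ K * p) with (z * p ^ S K) by (simpl; ring).
  unfold gauss_factor; field; split; nra.
Qed.

Lemma is_lim_seq_gauss_sum_scaled (z : R) :
  0 <= z < 1 -> is_lim_seq (fun K => gauss_sum (z * p ^ K)) 1.
Proof.
  intros Hz.
  apply is_lim_seq_le_le with (fun _ => 1) (fun K => / (1 - z * p ^ K)).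
  - intros K; apply gauss_sum_bounds, scaled_bounds, Hz.
  - apply is_lim_seq_const.
  - replace (Finite 1) with (Rbar_inv (Finite (1 - z * 0))) by (simpl; f_equal; field).
    apply is_lim_seq_inv; [|simpl; intros Heq; injection Heq; lra].
    apply is_lim_seq_minus'; [apply is_lim_seq_const|].
    apply (is_lim_seq_scal_l _ z 0), is_lim_seq_geom.
    pose proof (pow_p_bounds 1); rewrite pow_1 in *; rewrite Rabs_pos_eq; lra.
Qed.

Theorem q_gauss_summation (z X Y Z : R) : 0 <= z < 1 ->
  qpoch_inf (a * z) p X -> qpoch_inf (a ^ 2 * z) p Y -> qpoch_inf z p Z ->
  is_series (gauss_term z) (X ^ 2 / (Y * Z)).
Proof.
  intros Hz HX HY HZ.
  assert (Hp1 : 0 <= p < 1) by lra.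
  assert (HY0 : 0 < Y).
  { apply (qpoch_inf_pos (a ^ 2 * z) p); [pose proof a2_bounds; nra | exact Hp1 | exact HY]. }
  assert (HZ0 : 0 < Z) by exact (qpoch_inf_pos z p Hz Hp1 Z HZ).
  unfold qpoch_inf in *; apply is_lim_seq_Reals in HX, HY, HZ.
  assert (Hlhs : is_lim_seq (fun K => qpoch_partial (a * z) p K ^ 2 * gauss_sum (z * p ^ K))
                   (gauss_sum z * Y * Z)).
  { apply is_lim_seq_ext with
      (fun K => gauss_sum z * qpoch_partial (a ^ 2 * z) p K * qpoch_partial z p K);
      [intros K; apply gauss_sum_qpoch_partial, Hz|].
    apply is_lim_seq_mult'; [apply is_lim_seq_mult'; [apply is_lim_seq_const|]|]; assumption. }
  assert (Hrhs : is_lim_seq (fun K => qpoch_partial (a * z) p K ^ 2 * gauss_sum (z * p ^ K))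
                   (X ^ 2 * 1)).
  { apply is_lim_seq_mult'; [|apply is_lim_seq_gauss_sum_scaled, Hz].
    simpl; apply is_lim_seq_mult'; [exact HX|].
    apply is_lim_seq_mult'; [exact HX | apply is_lim_seq_const]. }
  assert (Hid : gauss_sum z * Y * Z = X ^ 2 * 1).
  { apply is_lim_seq_unique in Hlhs, Hrhs; rewrite Hlhs in Hrhs; injection Hrhs; easy. }
  replace (X ^ 2 / (Y * Z)) with (gauss_sum z)
    by (rewrite <- (Rmult_1_r (X ^ 2)), <- Hid; field; lra).
  apply Series_correct, ex_series_gauss_term, Hz.
Qed.

End QGauss.

Lemma qpow_INR (q : R) (n : nat) : 0 < q -> qpow q (INR n) = q ^ n.
Proof. intros Hq; unfold qpow; rewrite <- Rpower_pow by exact Hq; reflexivity. Qed.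

Lemma qnum_INR (q : R) (n : nat) : 0 < q -> qnum q (INR n) = (1 - (q ^ 2) ^ n) / (1 - q ^ 2).
Proof.
  intros Hq; unfold qnum.
  replace (2 * INR n) with (INR (2 * n)) by (rewrite mult_INR; simpl; ring).
  rewrite qpow_INR, pow_mult by exact Hq; reflexivity.
Qed.

Lemma qnum_half_INR (q : R) (n : nat) :
  0 < q -> qnum q (1 / 2 + INR n) = (1 - q * (q ^ 2) ^ n) / (1 - q ^ 2).
Proof.
  intros Hq; unfold qnum.
  replace (2 * (1 / 2 + INR n)) with (INR (1 + 2 * n)) by (rewrite plus_INR, mult_INR; simpl; field).
  rewrite qpow_INR, pow_add, pow_mult, pow_1 by exact Hq; reflexivity.
Qed.

Lemma qfact_pos (q : R) (n : nat) : 0 < q < 1 -> 0 < qfact q n.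
Proof.
  intros Hq; induction n as [|n IH]; cbn [qfact]; [lra|].
  rewrite qnum_INR by lra; apply Rmult_lt_0_compat; [exact IH|].
  assert (0 <= (q ^ 2) ^ S n < 1) by (apply pow_lt_1_compat; [nra | lia]).
  apply Rdiv_lt_0_compat; nra.
Qed.

Lemma term6_gauss_term (q : R) (n : nat) :
  0 < q < 1 -> term6 q n = gauss_term (q ^ 2) q (q ^ 4) n / (1 + q ^ 2).
Proof.
  intros Hq; assert (Hq2 : 0 < q ^ 2 < 1) by nra.
  induction n as [|n IH].
  - unfold term6; cbn [qhalf_poch qfact gauss_term Nat.add].
    rewrite !qnum_INR by lra; simpl; field; nra.
  - unfold term6 in *; cbn [qhalf_poch qfact gauss_term Nat.add] in *.
    rewrite qnum_half_INR, !qnum_INR by lra.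
    replace (gauss_term (q ^ 2) q (q ^ 4) n)
      with (qhalf_poch q n ^ 2 / (qfact q n * qfact q (n + 2)) * q ^ (4 * n) * (1 + q ^ 2))
      by (rewrite IH; field; nra).
    replace (q ^ (4 * S n)) with (q ^ (4 * n) * q ^ 4) by (rewrite <- pow_add; f_equal; lia).
    replace ((q ^ 2) ^ S (n + 2)) with (q ^ 2 * q ^ 4 * (q ^ 2) ^ n)
      by (replace (S (n + 2)) with (3 + n)%nat by lia; rewrite pow_add; ring).
    change ((q ^ 2) ^ S n) with (q ^ 2 * (q ^ 2) ^ n).
    pose proof (qfact_pos q n Hq); pose proof (qfact_pos q (n + 2) Hq).
    assert (0 < (q ^ 2) ^ n <= 1) by (split; [apply pow_lt | apply pow_le_one]; lra).
    assert (0 < q ^ 4 <= 1) by (split; [apply pow_lt | apply pow_le_one]; lra).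
    assert (q ^ 2 * q ^ 4 < 1) by nra.
    field; repeat split; nra.
Qed.

Theorem mainTheorem6 :
  forall q A B : R, 0 < q < 1 ->
    qpoch_inf (q ^ 2) (q ^ 2) A ->
    qpoch_inf q (q ^ 2) B ->
    infinite_sum (term6 q)
      ((1 + q) ^ 4 * qpow q (1/4) / (pi_q_of q A B * (1 + q + q ^ 2) ^ 2)).
Proof.
  intros q A B Hq HA HB.
  assert (Hq2 : 0 < q ^ 2 < 1) by nra.
  assert (HA0 : 0 < A) by (apply (qpoch_inf_pos (q ^ 2) (q ^ 2)); [lra | lra | exact HA]).
  assert (HB0 : 0 < B) by (apply (qpoch_inf_pos q (q ^ 2)); [lra | lra | exact HB]).
  assert (HX : qpoch_inf (q * q ^ 4) (q ^ 2) (B / (1 - q) / (1 - q * q ^ 2))).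
  { replace (q * q ^ 4) with (q * q ^ 2 * q ^ 2) by ring.
    apply qpoch_inf_shift; [nra|]; apply qpoch_inf_shift; [lra | exact HB]. }
  assert (HY : qpoch_inf (q ^ 2 * q ^ 4) (q ^ 2) (A / (1 - q ^ 2) / (1 - q ^ 2 * q ^ 2))).
  { replace (q ^ 2 * q ^ 4) with (q ^ 2 * q ^ 2 * q ^ 2) by ring.
    apply qpoch_inf_shift; [nra|]; apply qpoch_inf_shift; [lra | exact HA]. }
  assert (HZ : qpoch_inf (q ^ 4) (q ^ 2) (A / (1 - q ^ 2))).
  { replace (q ^ 4) with (q ^ 2 * q ^ 2) by ring; apply qpoch_inf_shift; [lra | exact HA]. }
  assert (Hsum := q_gauss_summation (q ^ 2) q ltac:(lra) ltac:(nra) ltac:(lra) (q ^ 4) _ _ _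
                    ltac:(nra) HX HY HZ).
  apply is_series_Reals.
  apply is_series_ext with (fun n => gauss_term (q ^ 2) q (q ^ 4) n * / (1 + q ^ 2)).
  { intros n; rewrite term6_gauss_term by exact Hq; reflexivity. }
  replace ((1 + q) ^ 4 * qpow q (1/4) / (pi_q_of q A B * (1 + q + q ^ 2) ^ 2))
    with ((B / (1 - q) / (1 - q * q ^ 2)) ^ 2 /
          ((A / (1 - q ^ 2) / (1 - q ^ 2 * q ^ 2)) * (A / (1 - q ^ 2))) * / (1 + q ^ 2)).
  { exact (is_series_scal_r _ _ _ Hsum). }
  assert (0 < qpow q (1/4)) by apply exp_pos.
  unfold pi_q_of; field; repeat split; nra.
Qed.
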